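(* Let $p>3$ and $q>6p^4$ be primes, $G=\mathbb{Z}_6^5\times\mathbb{Z}_q$, $H=\mathbb{Z}_p^4$, $A\subset G$ the set defined in the context, $B\subset H$ a spectral set with $|B|=2p$, $\{v_1,\dots,v_4\}$ a basis of $H$ over $\mathbb{Z}_p$, and $t:A\to H$ given by $t(0_{\mathbb{Z}_6^5},k)=v_k$ for $1\le k\le4$ and $t(a)=0_H$ otherwise. Then $P_t=\bigcup_{a\in A}\{a\}\times(t(a)+B)$ is not spectral in $G\times H$.
   Context: A subset $X$ of a finite abelian group $E$ is spectral if there is a set $S$ of characters of $E$ with $|S|=|X|$ and $\hat 1_X(s-s')=0$ for all distinct $s,s'\in S$, where $\hat f(\chi)=\sum_x f(x)\chi(x)$. Characters of $G\times H$ are identified with vectors $(\gamma_1,\gamma_2,\rho)\in\mathbb{Z}_6^5\times\mathbb{Z}_q\times\mathbb{Z}_p^4$ acting by $(u_1,u_2,w)\mapsto e^{2\pi i(\langle\gamma_1,u_1\rangle/6+\gamma_2u_2/q+\langle\rho,w\rangle/p)}$. Construction of $A$: let $v=(1,2,3,4,5)\in\mathbb{Z}_6^5$; for $\pi\in S_5$ let $\pi(v)$ be the vector with permuted coordinates and $A_\pi=\{x\in\mathbb{Z}_6^5:\langle \pi(v),x\rangle\equiv 0\pmod 6\}$. Enumerate $S_5$ as $\pi_0,\dots,\pi_{119}$; for $0\le k\le119$ set $A_k=A_{\pi_k}\times\{k\}$, for $120\le k\le q-1$ set $A_k=A_{\pi_0}\times\{k\}$, and $A=\bigcup_{k=0}^{q-1}A_k$.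 Known fact (may be used): $A$ is a tile of $G$ but is not spectral in $G$. *)

From HB Require Import structures.
From mathcomp Require Import all_boot all_order all_algebra all_fingroup.
From mathcomp Require Import complex.
From mathcomp Require Import reals trigo Rstruct.
Set Implicit Arguments. Unset Strict Implicit. Unset Printing Implicit Defensive.
Import Order.TTheory GRing.Theory Num.Theory.
Local Open Scope ring_scope.

Definition RR := Rdefinitions.R.
Definition CC := (RR[i])%type.

Definition expi (theta : RR) : CC :=
  ((cos (2 * pi * theta)) +i* (sin (2 * pi * theta)))%C.

Definition vphase (n m : nat) (g u : {ffun 'I_m -> 'Z_n}) : RR :=
  ((\sum_(i < m) (val (g i) * val (u i)))%N)%:R / n%:R.

(* Generic Fourier transform of an indicator and spectrality, for a finite
   abelian group T whose characters are identified with T via a phase map: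
   the character chi acts by x |-> e^{2 pi i phase chi x}. *)
Definition fhat (T : finZmodType) (phase : T -> T -> RR) (X : {set T}) (chi : T)
  : CC := \sum_(x in X) expi (phase chi x).

Definition spectral (T : finZmodType) (phase : T -> T -> RR) (X : {set T}) : Prop :=
  exists S : {set T}, #|S| = #|X| /\
    forall s s', s \in S -> s' \in S -> s != s' -> fhat phase X (s - s') = 0.

Definition Z6_5 := {ffun 'I_5 -> 'Z_6}.
HB.instance Definition _ := Finite.on Z6_5.
HB.instance Definition _ := GRing.Zmodule.on Z6_5.
Definition Gt (q : nat) := (Z6_5 * 'Z_q)%type.
HB.instance Definition _ q := Finite.on (Gt q).
HB.instance Definition _ q := GRing.Zmodule.on (Gt q).
Definition Ht (p : nat) := {ffun 'I_4 -> 'Z_p}.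
HB.instance Definition _ p := Finite.on (Ht p).
HB.instance Definition _ p := GRing.Zmodule.on (Ht p).
Definition GHt (p q : nat) := (Gt q * Ht p)%type.
HB.instance Definition _ p q := Finite.on (GHt p q).
HB.instance Definition _ p q := GRing.Zmodule.on (GHt p q).

Definition phaseH (p : nat) (rho w : Ht p) : RR := vphase rho w.

Definition phaseGH (p q : nat) (chi x : GHt p q) : RR :=
  vphase chi.1.1 x.1.1
  + ((val chi.1.2 * val x.1.2)%N)%:R / q%:R
  + vphase chi.2 x.2.

(* A_pi = {x in Z_6^5 : <pi(v), x> = 0 mod 6},  v = (1,2,3,4,5),
   pi(v)_i = v_{pi(i)} *)
Definition Api (pi : 'S_5) : {set Z6_5} :=
  [set x : Z6_5 | ((\sum_(i < 5) (val (pi i)).+1 * val (x i)) %% 6 == 0)%N].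

(* enumeration pi_0..pi_119 of S_5 given by e; pi_k for k >= 120 is pi_0 *)
Definition pik (e : 'I_120 -> 'S_5) (k : nat) : 'S_5 :=
  match insub k with Some j => e j | None => e ord0 end.

(* A = union over k in Z_q of A_k,  A_k = A_{pi_k} x {k} (or A_{pi_0} x {k}) *)
Definition Aset (q : nat) (e : 'I_120 -> 'S_5) : {set Gt q} :=
  [set a : Gt q | a.1 \in Api (pik e (val a.2))].

Definition is_basis (p : nat) (v : 'I_4 -> Ht p) : Prop :=
  bijective (fun c : {ffun 'I_4 -> 'Z_p} =>
    \sum_(i < 4) [ffun j => c i * v i j] : Ht p).

Definition tmap (p q : nat) (v : 'I_4 -> Ht p) (a : Gt q) : Ht p :=
  if (a.1 == 0) && (1 <= val a.2 <= 4)%N then v (inord (val a.2).-1) else 0.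

Definition Pt (p q : nat) (A : {set Gt q}) (t : Gt q -> Ht p) (B : {set Ht p})
  : {set GHt p q} :=
  [set (a, t a + b) | a in A, b in B].

From HB Require Import structures.
From mathcomp Require Import all_boot all_order all_algebra all_fingroup.
From mathcomp Require Import complex.
From mathcomp Require Import trigo Rstruct.
From mathcomp Require Import ring zify.
Set Implicit Arguments. Unset Strict Implicit. Unset Printing Implicit Defensive.
Import GRing.Theory Num.Theory.
Local Open Scope ring_scope.

(* Let S be a spectrum of P.  Spectral pairs are symmetric (the character
   matrix of (S, P) is square with orthogonal rows, hence orthogonal columns),
   so the Fourier transform of 1_S vanishes on every nonzero difference of P.
   Every nonzero w in the 3-torsion subgroup 2Z_6^5 ~ Z_3^5 of Z_6^5 lies in
   some A_pi; as A_pi is a subgroup, (w, k) and (2w, k) lie in A_k, where t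
   vanishes, so (w, 0, 0) is a difference of P.  Summing the transform of 1_S
   over W = Z_3^5 x 0 x 0 then gives |S| = |W| * #{s in S | s trivial on W},
   so 3^5 divides |S| = |P| = |A| |B| = 6^4 q * 2p, impossible for primes
   p, q > 3. *)

Lemma expiD (a b : RR) : expi (a + b) = expi a * expi b.
Proof. by rewrite /expi mulrDr trigo.cosD trigo.sinD; congr (_ +i* _)%C; ring. Qed.

Lemma expi0 : expi 0 = 1.
Proof. by rewrite /expi mulr0 cos0 sin0. Qed.

Lemma expi_nat (n : nat) : expi n%:R = 1.
Proof.
elim: n => [|n IHn]; first exact: expi0.
by rewrite -addn1 natrD expiD IHn /expi mulr1 mulr_natl cos2pi sin2pi mul1r.
Qed.

Lemma expi_neq0 (a : RR) : expi a != 0.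
Proof.
apply/eqP => ea0; have := expiD a (- a).
by rewrite addrN expi0 ea0 mul0r => /eqP; rewrite oner_eq0.
Qed.

Lemma expi_sum (I : Type) (r : seq I) (P : pred I) (F : I -> RR) :
  expi (\sum_(i <- r | P i) F i) = \prod_(i <- r | P i) expi (F i).
Proof. exact: (big_morph _ expiD expi0). Qed.

Lemma expi_modn (n X Y : nat) : (0 < n)%N -> X = Y %[mod n] ->
  expi (X%:R / n%:R) = expi (Y%:R / n%:R).
Proof.
move=> n_gt0; wlog XY : X Y / (X <= Y)%N.
  by move=> wlogXY; case/orP: (leq_total X Y) => ? ?; [|symmetry]; apply: wlogXY.
move=> eqXY; have /dvdnP[K YXE] : (n %| Y - X)%N by rewrite -eqn_mod_dvd // eqXY.
rewrite -(subnKC XY) YXE natrD natrM mulrDl mulfK ?pnatr_eq0 -?lt0n //.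
by rewrite expiD expi_nat mulr1.
Qed.

Lemma expi_ZpD (n : nat) (a b : 'Z_n) (c : nat) : (1 < n)%N ->
  expi ((val (a + b) * c)%:R / n%:R)
  = expi ((val a * c)%:R / n%:R) * expi ((val b * c)%:R / n%:R).
Proof.
move=> n_gt1; rewrite -expiD -mulrDl -natrD -mulnDl.
apply: expi_modn; first exact: ltnW.
rewrite /=; move: (val a + val b)%N => k.
by rewrite Zp_cast // modnMml.
Qed.

Lemma expi_vphase (n m : nat) (a u : {ffun 'I_m -> 'Z_n}) :
  expi (vphase a u) = \prod_i expi ((val (a i) * val (u i))%:R / n%:R).
Proof. by rewrite /vphase natr_sum mulr_suml expi_sum. Qed.

Lemma expi_vphaseD (n m : nat) (a b u : {ffun 'I_m -> 'Z_n}) : (1 < n)%N ->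
  expi (vphase (a + b) u) = expi (vphase a u) * expi (vphase b u).
Proof.
move=> n_gt1; rewrite !expi_vphase -big_split; apply: eq_bigr => i _.
by rewrite ffunE expi_ZpD.
Qed.

Lemma vphaseC (n m : nat) (a u : {ffun 'I_m -> 'Z_n}) : vphase a u = vphase u a.
Proof. by rewrite /vphase; under eq_bigr do rewrite mulnC. Qed.

Lemma phaseGHC (p q : nat) (a x : GHt p q) : phaseGH a x = phaseGH x a.
Proof. by rewrite /phaseGH vphaseC mulnC [vphase a.2 _]vphaseC. Qed.

Lemma expi_phaseGHD (p q : nat) : (1 < p)%N -> (1 < q)%N -> forall a b x : GHt p q,
  expi (phaseGH (a + b) x) = expi (phaseGH a x) * expi (phaseGH b x).
Proof.
move=> p_gt1 q_gt1 a b x; rewrite /phaseGH !expiD.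
rewrite [(a + b).1.1]/= expi_vphaseD // [(a + b).1.2]/= expi_ZpD //.
by rewrite [(a + b).2]/= expi_vphaseD //; ring.
Qed.

Section Characters.

Variables (T : finZmodType) (phase : T -> T -> RR).
Hypothesis phaseC : forall a x, phase a x = phase x a.
Hypothesis expi_phaseD :
  forall a b x, expi (phase (a + b) x) = expi (phase a x) * expi (phase b x).

Local Notation chi a x := (expi (phase a x)).

Lemma expi_phase0 x : chi 0 x = 1.
Proof.
apply: (mulIf (expi_neq0 (phase 0 x))).
by rewrite mul1r -expi_phaseD addr0.
Qed.

Lemma expi_phaseNr a x : chi a (- x) = chi (- a) x.
Proof.
apply: (mulIf (expi_neq0 (phase a x))).
rewrite -expi_phaseD addNr expi_phase0.
by rewrite phaseC [phase a x]phaseC -expi_phaseD addNr expi_phase0.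
Qed.

Lemma sum_expi_phase_morph (U : finZmodType) (g : U -> T) x :
  {morph g : u v / u + v} ->
  \sum_u chi (g u) x = if [forall u, chi (g u) x == 1] then #|U|%:R else 0.
Proof.
move=> gD.
have [/forallP chi1 | /forallPn [u0 chi_u0]] := boolP [forall u, chi (g u) x == 1].
  by rewrite (eq_bigr (fun=> 1)) ?sumr_const // => u _; apply/eqP.
set sigma := \sum_u _; suff: (chi (g u0) x - 1) * sigma = 0.
  by move/eqP; rewrite mulf_eq0 subr_eq0 (negbTE chi_u0) => /eqP.
have shift : chi (g u0) x * sigma = sigma.
  rewrite mulr_sumr [RHS](reindex_inj (addrI u0)) /=.
  by apply: eq_bigr => u _; rewrite gD expi_phaseD.
by rewrite mulrBl shift mul1r subrr.
Qed.

Lemma card_dvd_fhat_vanish (U : finZmodType) (g : U -> T) (S : {set T}) :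
  {morph g : u v / u + v} -> (forall u, u != 0 -> fhat phase S (g u) = 0) ->
  (#|U| %| #|S|)%N.
Proof.
move=> gD vanish; have g0 : g 0 = 0 by apply: (addrI (g 0)); rewrite -gD !addr0.
pose S1 := [set x in S | [forall u, chi (g u) x == 1]].
suff : #|S|%:R = (#|U| * #|S1|)%:R :> CC.
  by move/eqP; rewrite eqr_nat => /eqP ->; apply: dvdn_mulr.
transitivity (\sum_u fhat phase S (g u)).
  rewrite (bigD1 0) //= big1 ?addr0 => [|u /vanish //].
  by rewrite g0 /fhat (eq_bigr (fun=> 1)) ?sumr_const // => x _; rewrite expi_phase0.
rewrite /fhat exchange_big /=.
under eq_bigr do rewrite sum_expi_phase_morph //.
rewrite -big_mkcondr /= sumr_const natrM mulr_natr.
by congr (_ *+ _); apply: eq_card => x; rewrite inE.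
Qed.

Lemma expi_phase_cols n (s x : 'I_n -> T) :
  (forall i i', i != i' -> \sum_j chi (s i - s i') (x j) = 0) ->
  forall j j', j != j' -> \sum_i chi (s i) (x j - x j') = 0.
Proof.
move=> rows_orth j j' jj'.
pose M : 'M[CC]_n := \matrix_(i, k) chi (s i) (x k).
pose N : 'M[CC]_n := \matrix_(k, i) chi (- s i) (x k).
have n0 : (n%:R : CC) != 0 by rewrite pnatr_eq0 -lt0n (leq_ltn_trans _ (ltn_ord j)).
have MN : M *m (n%:R^-1 *: N) = 1%:M.
  rewrite -scalemxAr; apply/matrixP => i i'; rewrite !mxE.
  under eq_bigr do rewrite !mxE -expi_phaseD.
  have [<-|ii'] := eqVneq; last by rewrite rows_orth ?mulr0.
  under eq_bigr do rewrite subrr expi_phase0.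
  by rewrite sumr_const card_ord mulr1n mulVf.
have /matrixP/(_ j' j) := mulmx1C MN.
rewrite -scalemxAl !mxE eq_sym (negbTE jj') mulr0n => /eqP.
rewrite mulf_eq0 invr_eq0 (negbTE n0) /= => /eqP NM0; rewrite -[RHS]NM0.
apply: eq_bigr => i _; rewrite !mxE -expi_phaseNr mulrC.
by rewrite phaseC expi_phaseD ![phase _ (s i)]phaseC.
Qed.

Lemma spectral_dual (X S : {set T}) : #|S| = #|X| ->
  {in S &, forall s s', s != s' -> fhat phase X (s - s') = 0} ->
  {in X &, forall x x', x != x' -> fhat phase S (x - x') = 0}.
Proof.
move=> cardS S_spec x0 x0' x0X x0'X x0x0'.
pose s i := enum_val (cast_ord (esym cardS) i) : T.
have s_inj : injective s by move=> i i' /enum_val_inj/cast_ord_inj.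
rewrite /fhat big_enum_val (reindex (cast_ord (esym cardS))) /=; last first.
  by exists (cast_ord cardS) => k _; rewrite ?cast_ordK ?cast_ordKV.
under eq_bigr do rewrite phaseC.
have := @expi_phase_cols _ s enum_val _ (enum_rank_in x0X x0) (enum_rank_in x0X x0').
rewrite !enum_rankK_in //; apply.
  move=> i i' ii'; rewrite -(big_enum_val (fun y => chi (s i - s i') y)).
  apply: S_spec; rewrite ?enum_valP //.
  by apply: contra ii' => /eqP/s_inj ->.
by apply: contra x0x0' => /eqP/(congr1 enum_val); rewrite !enum_rankK_in // => ->.
Qed.

End Characters.

Lemma card_ker_morph (T U : finZmodType) (f : T -> U) :
  {morph f : x y / x + y} -> (forall u, exists x, f x = u) ->
  #|T| = (#|U| * #|[set x | f x == 0%R]|)%N.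
Proof.
move=> fD f_surj.
have f0 : f 0 = 0 by apply: (addrI (f 0)); rewrite -fD !addr0.
have fN x : f (- x) = - f x by apply/eqP; rewrite -addr_eq0 -fD addNr f0.
rewrite -sum_nat_const -[#|T|]sum1_card (partition_big f xpredT) //.
apply: eq_bigr => u _; have [xu fxu] := f_surj u.
rewrite sum1_card -[RHS](card_imset _ (addIr xu)); apply: eq_card => x.
apply/eqP/imsetP => [fx | [y]].
  by exists (x - xu); rewrite ?inE ?fD ?fN ?fx ?fxu ?subrr // subrK.
by rewrite inE => /eqP fy0 ->; rewrite fD fy0 fxu add0r.
Qed.

Definition Api_form (pi : 'S_5) (x : Z6_5) : 'Z_6 :=
  \sum_i (val (pi i)).+1%:R * x i.

Lemma Api_formD pi : {morph Api_form pi : x y / x + y}.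
Proof.
by move=> x y; rewrite /Api_form -big_split; apply: eq_bigr => i _; rewrite ffunE mulrDr.
Qed.

Lemma Api_formE pi : Api pi = [set x | Api_form pi x == 0].
Proof.
apply/setP => x; rewrite !inE /Api_form.
under [X in _ = (X == 0)]eq_bigr do rewrite -[x _]natr_Zp -natrM.
by rewrite -natr_sum -val_eqE /= val_Zp_nat.
Qed.

Lemma card_Api pi : #|Api pi| = (6 ^ 4)%N.
Proof.
pose i0 := (pi^-1 ord0)%g.
have form_surj u : exists x, Api_form pi x = u.
  exists [ffun i => if i == i0 then u else 0].
  rewrite /Api_form (bigD1 i0) //= big1 => [|i /negbTE i_i0]; last first.
    by rewrite ffunE i_i0 mulr0.
  by rewrite ffunE eqxx permKV mul1r addr0.
have := card_ker_morph (Api_formD pi) form_surj.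
rewrite -Api_formE card_ffun !card_ord; change (Zp_trunc 6).+2 with 6%N.
by rewrite expnS => /eqP; rewrite eqn_pmul2l // eq_sym => /eqP.
Qed.

Lemma card_fibred (T1 T2 : finType) (F : T2 -> {set T1}) :
  #|[set a : T1 * T2 | a.1 \in F a.2]| = (\sum_k #|F k|)%N.
Proof.
transitivity (\sum_x \sum_k (x \in F k) : nat)%N.
  rewrite pair_bigA -sum1_card big_mkcond /=.
  by apply: eq_bigr => -[x k] _; rewrite inE; case: (x \in F k).
rewrite exchange_big /=; apply: eq_bigr => k _.
by rewrite -sum1_card [RHS]big_mkcond; apply: eq_bigr => x _; case: (x \in F k).
Qed.

Lemma card_Aset (q : nat) (e : 'I_120 -> 'S_5) :
  (1 < q)%N -> #|Aset q e| = (6 ^ 4 * q)%N.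
Proof.
move=> q_gt1; rewrite [LHS](card_fibred (fun k : 'Z_q => Api (pik e (val k)))).
rewrite (eq_bigr (fun=> 6 ^ 4)%N) => [|k _]; last exact: card_Api.
by rewrite sum_nat_const card_ord Zp_cast // mulnC.
Qed.

Lemma card_Pt (p q : nat) (A : {set Gt q}) (t : Gt q -> Ht p) (B : {set Ht p}) :
  #|Pt A t B| = (#|A| * #|B|)%N.
Proof.
rewrite /Pt curry_imset2X card_in_imset ?cardsX // => -[a b] [a' b'] _ _ /= [<-].
by move/addrI ->.
Qed.

Definition dbl (x : 'Z_3) : 'Z_6 := inZp (2 * x).

Lemma val_dbl x : val (dbl x) = (2 * x)%N.
Proof. by case: x => [[|[|[|//]]] ?]. Qed.

Lemma dblD : {morph dbl : x y / x + y}.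
Proof. by move=> [[|[|[|//]]] ?] [[|[|[|//]]] ?]; apply: val_inj. Qed.

Lemma dbl_eq0 x : (dbl x == 0) = (x == 0).
Proof. by case: x => [[|[|[|//]]] ?]. Qed.

Lemma dbl_addrr_eq0 x : (dbl x + dbl x == 0) = (x == 0).
Proof. by case: x => [[|[|[|//]]] ?]. Qed.

Definition Z3_5 := {ffun 'I_5 -> 'Z_3}.
HB.instance Definition _ := Finite.on Z3_5.
HB.instance Definition _ := GRing.Zmodule.on Z3_5.

Definition dbl5 (a : Z3_5) : Z6_5 := [ffun i => dbl (a i)].

Lemma dbl5D : {morph dbl5 : a b / a + b}.
Proof. by move=> a b; apply/ffunP => i; rewrite !ffunE dblD. Qed.

Lemma ffun_comp_eq0 (I : finType) (V W : zmodType) (f : V -> W) (a : {ffun I -> V}) :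
  (forall x, (f x == 0) = (x == 0)) -> ([ffun i => f (a i)] == 0) = (a == 0).
Proof.
move=> f_eq0; apply/eqP/eqP => [/ffunP fa0 | ->]; apply/ffunP => i.
  by move: (fa0 i); rewrite !ffunE => /eqP; rewrite f_eq0 => /eqP.
by rewrite !ffunE; apply/eqP; rewrite f_eq0.
Qed.

Lemma perm_of_iota (n : nat) (l : seq nat) : perm_eq l (iota 0 n) ->
  exists pi : 'S_n, forall i : 'I_n, val (pi i) = nth 0%N l i.
Proof.
case: n => [|n] l_perm; first by exists 1%g => -[].
have l_size : size l = n.+1 by rewrite (perm_size l_perm) size_iota.
have l_lt (i : 'I_n.+1) : (nth 0%N l i < n.+1)%N.
  have : nth 0%N l i \in l by rewrite mem_nth ?l_size.
  by rewrite (perm_mem l_perm) mem_iota.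
have f_inj : injective (fun i : 'I_n.+1 => inord (nth 0%N l i) : 'I_n.+1).
  move=> i j /(congr1 val); rewrite /= !inordK // => /eqP.
  by rewrite nth_uniq ?l_size ?(perm_uniq l_perm) ?iota_uniq // => /eqP/val_inj.
by exists (perm f_inj) => i; rewrite permE /= inordK.
Qed.

Definition Api_perms : seq (seq nat) :=
  [:: [:: 0;1;2;3;4]; [:: 0;1;2;4;3]; [:: 0;1;3;2;4]; [:: 0;1;4;3;2];
      [:: 0;2;1;3;4]; [:: 0;3;1;4;2]; [:: 2;0;3;1;4]].

Lemma Api_perms_perm : all (fun l => perm_eq l (iota 0 5)) Api_perms.
Proof. by []. Qed.

Lemma Api_perms_cover a0 a1 a2 a3 a4 :
  (a0 < 3)%N -> (a1 < 3)%N -> (a2 < 3)%N -> (a3 < 3)%N -> (a4 < 3)%N ->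
  (0 < a0 + a1 + a2 + a3 + a4)%N ->
  has (fun l => ((nth 0 l 0).+1 * (2 * a0) + (nth 0 l 1).+1 * (2 * a1)
                 + (nth 0 l 2).+1 * (2 * a2) + (nth 0 l 3).+1 * (2 * a3)
                 + (nth 0 l 4).+1 * (2 * a4)) %% 6 == 0)%N Api_perms.
Proof.
by case: a0 => [|[|[|//]]] _; case: a1 => [|[|[|//]]] _; case: a2 => [|[|[|//]]] _;
   case: a3 => [|[|[|//]]] _; case: a4 => [|[|[|//]]] _.
Qed.

Lemma sum5 (F : 'I_5 -> nat) :
  (\sum_i F i = F (inord 0) + F (inord 1) + F (inord 2) + F (inord 3) + F (inord 4))%N.
Proof.
rewrite !big_ord_recl big_ord0 addn0 !addnA.
by congr (_ + _ + _ + _ + _)%N; congr F; apply: val_inj; rewrite /= inordK.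
Qed.

Lemma exists_Api (a : Z3_5) : a != 0 -> exists pi, dbl5 a \in Api pi.
Proof.
move=> a_neq0.
have a_pos : (0 < \sum_i val (a i))%N.
  rewrite lt0n sum_nat_eq0; apply: contra a_neq0 => /forallP a0.
  by apply/eqP/ffunP => i; apply: val_inj; rewrite ffunE; exact/eqP/a0.
rewrite sum5 in a_pos.
have /hasP[l l_in l_ok] := Api_perms_cover (ltn_ord _) (ltn_ord _) (ltn_ord _)
  (ltn_ord _) (ltn_ord _) a_pos.
have [pi pi_l] := perm_of_iota (allP Api_perms_perm l l_in).
by exists pi; rewrite inE sum5 !pi_l !ffunE !val_dbl !inordK.
Qed.

Definition embGH (p q : nat) (a : Z3_5) : GHt p q := ((dbl5 a, 0), 0).

Lemma embGHD p q : {morph embGH p q : a b / a + b}.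
Proof. by move=> a b; rewrite /embGH dbl5D; congr (_, _, _); rewrite addr0. Qed.

Lemma Api_addr_closed pi x y : x \in Api pi -> y \in Api pi -> x + y \in Api pi.
Proof. by rewrite Api_formE !inE Api_formD => /eqP-> /eqP->; rewrite addr0. Qed.

Lemma tmap_eq0 (p q : nat) (v : 'I_4 -> Ht p) (a : Gt q) : a.1 != 0 -> tmap v a = 0.
Proof. by rewrite /tmap => /negbTE->. Qed.

Lemma embGH_Pt_diff (p q : nat) (e : 'I_120 -> 'S_5) (v : 'I_4 -> Ht p)
    (B : {set Ht p}) (b0 : Ht p) (a : Z3_5) :
  bijective e -> (120 < q)%N -> b0 \in B -> a != 0 ->
  exists x y, [/\ x \in Pt (Aset q e) (tmap v) B, y \in Pt (Aset q e) (tmap v) B,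
                  x != y & x - y = embGH p q a].
Proof.
move=> [einv _ eK] q_gt120 b0B a_neq0.
have [pi w_pi] := exists_Api a_neq0; set w := dbl5 a in w_pi.
have w_neq0 : w != 0 by rewrite -(ffun_comp_eq0 a dbl_eq0) in a_neq0.
have ww_neq0 : w + w != 0.
  have -> : w + w = [ffun i => dbl (a i) + dbl (a i)].
    by apply/ffunP => i; rewrite !ffunE.
  by rewrite -(ffun_comp_eq0 a dbl_addrr_eq0) in a_neq0.
pose k : 'Z_q := inZp (einv pi).
have k_pi : pik e (val k) = pi.
  rewrite /pik /= Zp_cast ?modn_small; last 2 first.
  - exact: ltn_trans (ltn_ord _) q_gt120.
  - exact: ltn_trans q_gt120.
  by rewrite valK.
have in_Pt z : z != 0 -> z \in Api pi -> ((z, k), b0) \in Pt (Aset q e) (tmap v) B.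
  move=> z_neq0 z_pi; apply/imset2P; exists (z, k) b0 => //.
    by rewrite inE k_pi.
  by rewrite tmap_eq0 ?add0r.
exists ((w + w, k), b0), ((w, k), b0); split.
- exact: in_Pt (Api_addr_closed w_pi w_pi).
- exact: in_Pt.
- by apply: contra w_neq0 => /eqP[] /eqP; rewrite -subr_eq0 addrK.
- by rewrite /embGH; congr (_, _, _); rewrite /= ?addrK ?subrr.
Qed.

Theorem lemma3p5 (p q : nat) (e : 'I_120 -> 'S_5) (B : {set Ht p})
    (v : 'I_4 -> Ht p) :
  prime p -> (3 < p)%N -> prime q -> (6 * p ^ 4 < q)%N ->
  bijective e ->
  spectral (@phaseH p) B -> #|B| = (2 * p)%N ->
  is_basis v ->
  ~ spectral (@phaseGH p q) (Pt (Aset q e) (tmap v) B).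
Proof.
move=> p_pr p_gt3 q_pr q_big e_bij _ cardB _ [S [cardS S_spec]].
have p_gt1 := prime_gt1 p_pr; have q_gt1 := prime_gt1 q_pr.
have q_gt120 : (120 < q)%N.
  have : (4 ^ 4 <= p ^ 4)%N by rewrite leq_exp2r.
  lia.
have [b0 b0B] : exists b0, b0 \in B by apply/card_gt0P; rewrite cardB; lia.
have expiD_GH := expi_phaseGHD p_gt1 q_gt1.
have P_spec := spectral_dual (@phaseGHC p q) expiD_GH cardS S_spec.
have : (#|Z3_5| %| #|S|)%N.
  apply: (card_dvd_fhat_vanish expiD_GH (@embGHD p q)) => a a_neq0.
  have [x [y [xP yP xy xy_a]]] := embGH_Pt_diff v e_bij q_gt120 b0B a_neq0.
  by move: (P_spec x y xP yP xy); rewrite xy_a.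
rewrite cardS card_Pt card_Aset // cardB card_ffun !card_ord.
change (Zp_trunc 3).+2 with 3%N.
rewrite (_ : 6 ^ 4 * q * (2 * p) = 3 ^ 4 * (32 * (p * q)))%N; last by ring.
rewrite expnS mulnC dvdn_pmul2l // !Euclid_dvdM //= !(@dvdn_prime2 3) //.
by case/orP => /eqP; lia.
Qed.
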